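(* Let $\mathbb K$ be a field, let $A,A^*$ be a TD pair over $\mathbb K$, and let $q$ be a nonzero scalar in $\mathbb K$ with $q\ne 1,-1$. Then the following are equivalent: (i) $A,A^*$ satisfy the $q$-Serre relations $A^3A^*-(q+q^{-1}+1)A^2A^*A+(q+q^{-1}+1)AA^*A^2-A^*A^3=0$ and $A^{*3}A-(q+q^{-1}+1)A^{*2}AA^*+(q+q^{-1}+1)A^*AA^{*2}-AA^{*3}=0$; (ii) there exists an eigenvalue sequence for $A,A^*$ which is in $q$-geometric progression, and there exists a dual eigenvalue sequence for $A,A^*$ which is in $q$-geometric progression.
   Context: A TD pair on a finite-dimensional nonzero $\mathbb K$-vector space $V$ is an ordered pair $A,A^*$ of diagonalizable linear maps $V\to V$ such that there is an ordering $V_0,\dots,V_d$ of the eigenspaces of $A$ with $A^*V_i\subseteq V_{i-1}+V_i+V_{i+1}$ ($V_{-1}=V_{d+1}=0$), an ordering $V^*_0,\dots,V^*_\delta$ of the eigenspaces of $A^*$ with $AV^*_i\subseteq V^*_{i-1}+V^*_i+V^*_{i+1}$ ($V^*_{-1}=V^*_{\delta+1}=0$), and no subspace other than $0,V$ is invariant under both $A$ and $A^*$. An eigenvalue sequence for $A,A^*$ is an ordering $\theta_0,\dots,\theta_d$ of the distinct eigenvalues of $A$ such that the corresponding eigenspaces satisfy the first ordering condition; a dual eigenvalue sequence for $A,A^*$ is an eigenvalue sequence for the pair $A^*,A$. A sequence $\theta_0,\dots,\theta_d$ is in $q$-geometric progression if $\theta_i=\theta_{i-1}q$ for $1\le i\le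 d$. *)

From HB Require Import structures.
From mathcomp Require Import all_boot all_order all_algebra.
Set Implicit Arguments. Unset Strict Implicit. Unset Printing Implicit Defensive.
Import GRing.Theory.
Local Open Scope ring_scope.

Section TD.
Variables (K : fieldType) (V : vectType K).

Definition diagonalizable (A : 'End(V)) : Prop :=
  exists s : seq K, (\sum_(a <- s) passmx.leigenspace A a)%VS = fullv.

Definition eigsp (A : 'End(V)) (th : seq K) (i : nat) : {vspace V} :=
  if (i < size th)%N then passmx.leigenspace A th`_i else 0%VS.

(* th is an ordering of the distinct eigenvalues of A such that
   As V_i <= V_{i-1} + V_i + V_{i+1}, with V_{-1} = V_{d+1} = 0. *)
Definition eig_seq (A As : 'End(V)) (th : seq K) : Prop :=
  [/\ uniq th,
      (forall a : K, passmx.leigenvalue A a <-> a \in th) &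
      (forall i : nat, (i < size th)%N ->
         (As @: eigsp A th i <=
            (if i is j.+1 then eigsp A th j else 0%VS)
            + eigsp A th i + eigsp A th i.+1)%VS)].

Definition eigenvalue_sequence (A As : 'End(V)) (th : seq K) := eig_seq A As th.
Definition dual_eigenvalue_sequence (A As : 'End(V)) (th : seq K) := eig_seq As A th.

Definition TDpair (A As : 'End(V)) : Prop :=
  [/\ (0 < \dim (fullv : {vspace V}))%N,
      diagonalizable A /\ diagonalizable As,
      (exists th, eig_seq A As th),
      (exists th, eig_seq As A th) &
      (forall W : {vspace V}, (A @: W <= W)%VS -> (As @: W <= W)%VS ->
         W = 0%VS \/ W = fullv)].

Definition qSerre (q : K) (A B : 'End(V)) : Prop :=
  forall v : V,
    A (A (A (B v))) - (q + q^-1 + 1) *: A (A (B (A v)))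
    + (q + q^-1 + 1) *: A (B (A (A v))) - B (A (A (A v))) = 0 :> V.

Definition qgeometric (q : K) (th : seq K) : Prop :=
  forall i : nat, (0 < i < size th)%N -> th`_i = th`_i.-1 * q.

End TD.

From Pilot Require Import Defs.
From HB Require Import structures.
From mathcomp Require Import all_boot all_order all_algebra.
From mathcomp Require Import ring zify.
Set Implicit Arguments. Unset Strict Implicit. Unset Printing Implicit Defensive.
Import GRing.Theory.
Local Open Scope ring_scope.

(* Write beta = q + q^-1 + 1 and p(x, y) = x^3 - beta x^2 y + beta x y^2 - y^3,
   so that q p(x, y) = (x - y)(x - y q)(x q - y).  If v lies in the eigenspace
   V_i of A, then B v = u- + u0 + u+ with components in V_(i-1), V_i, V_(i+1),
   and the Serre expression at v equals p(th_(i-1), th_i) u- + p(th_(i+1), th_i) u+.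
   If th is a q-geometric progression both coefficients vanish, and since A is
   diagonalizable the relation holds on all of V.  Conversely, if
   p(th_(i+1), th_i) <> 0 then the Serre relation kills u+ on V_i, so
   V_0 + ... + V_i is a nonzero proper subspace invariant under A and B,
   contradicting irreducibility.  Hence th_(i+1) is th_i q or th_i q^-1 for
   every i; distinctness of the th_i makes the choice the same for all i, so th
   or its reversal (again an eigenvalue sequence) is a q-geometric progression. *)

Section Scalars.
Variable K : fieldType.
Implicit Types (q x y : K) (th : seq K).

Definition serre_poly q x y : K :=
  x ^+ 3 - (q + q^-1 + 1) * x ^+ 2 * y + (q + q^-1 + 1) * x * y ^+ 2 - y ^+ 3.

Lemma serre_polyxx q x : serre_poly q x x = 0.
Proof. by rewrite /serre_poly; ring. Qed.

Lemma serre_poly_eq0 q x y : q != 0 ->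
  (serre_poly q x y == 0) = [|| x == y, x == y * q | x * q == y].
Proof.
move=> q0; have factor : q * serre_poly q x y = (x - y) * (x - y * q) * (x * q - y).
  by rewrite /serre_poly; field.
by rewrite -(mulrI_eq0 _ (mulfI q0)) factor !mulf_eq0 !subr_eq0 -orbA.
Qed.

Lemma qgeometricP q th :
  qgeometric q th <-> (forall i, (i.+1 < size th)%N -> th`_i.+1 = th`_i * q).
Proof.
split=> [geo i ith | step [//|i] /andP[_ ith]]; last exact: step.
exact: geo.
Qed.

Lemma qgeometric_rev q th :
  qgeometric q (rev th) <-> (forall i, (i.+1 < size th)%N -> th`_i = th`_i.+1 * q).
Proof.
have revE i : (i.+1 < size th)%N ->
    (rev th)`_i.+1 = th`_(size th - i.+2) /\ (rev th)`_i = th`_(size th - i.+2).+1.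
  by move=> ith; rewrite !nth_rev ?(ltnW ith) ?subnSK.
rewrite qgeometricP size_rev; split=> step i ith.
  have ith' : ((size th - i.+2).+1 < size th)%N by lia.
  have := step _ ith'; have [-> ->] := revE _ ith'.
  by have -> : (size th - (size th - i.+2).+2 = i)%N by lia.
by have [-> ->] := revE _ ith; apply: step; lia.
Qed.

Lemma ratio_dichotomy q th : q != 0 -> uniq th ->
    (forall i, (i.+1 < size th)%N -> th`_i.+1 = th`_i * q \/ th`_i = th`_i.+1 * q) ->
  (forall i, (i.+1 < size th)%N -> th`_i.+1 = th`_i * q) \/
  (forall i, (i.+1 < size th)%N -> th`_i = th`_i.+1 * q).
Proof.
move=> q0 th_uniq step.
(* Consecutive steps in opposite directions would force th_(i+2) = th_i. *)
pose up i := th`_i.+1 == th`_i * q.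
have up_succ i : (i.+2 < size th)%N -> up i.+1 = up i.
  move=> ith; have th2 : th`_i.+2 != th`_i by rewrite nth_uniq ?gtn_eqF ?(ltnW (ltnW ith)).
  rewrite /up; apply/eqP/eqP => [up1 | up0].
    by case: (step i (ltnW ith)) => // down0; case/eqP: th2; rewrite up1 down0.
  case: (step i.+1 ith) => // down1; case/eqP: th2.
  by apply: (mulIf q0); rewrite -down1 -up0.
have up_const i : (i.+1 < size th)%N -> up i = up 0%N.
  by elim: i => [//|i IH] ith; rewrite up_succ // IH // ltnW.
case: (boolP (up 0%N)) => up0; [left | right] => i ith.
  by apply/eqP; rewrite -/(up i) (up_const i ith).
case: (step i ith) => // upi; case/negP: up0.
by rewrite -(up_const i ith) /up upi.
Qed.

End Scalars.

Section Eigenspaces.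
Variables (K : fieldType) (V : vectType K).
Implicit Types (A B : 'End(V)) (U : {vspace V}) (th : seq K).
Local Notation leigenspace := passmx.leigenspace.

Lemma leigenspaceP A a v : reflect (A v = a *: v) (v \in leigenspace A a).
Proof.
by rewrite memv_ker add_lfunE opp_lfunE scale_lfunE id_lfunE subr_eq0; exact: eqP.
Qed.

Lemma sub_leigenspace_stable A a U : (U <= leigenspace A a)%VS -> (A @: U <= U)%VS.
Proof.
move=> /subvP Ua; apply/subvP => _ /memv_imgP[u uU ->].
by have /leigenspaceP -> := Ua u uU; rewrite memvZ.
Qed.

Lemma sumv_stable (I : Type) (f : 'End(V)) (r : seq I) (P : pred I) (Us : I -> {vspace V}) :
    (forall i, P i -> (f @: Us i <= Us i)%VS) ->
  (f @: (\sum_(i <- r | P i) Us i) <= \sum_(i <- r | P i) Us i)%VS.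
Proof.
move=> fUs; rewrite limg_sum.
by elim/big_rec2: _ => [|i U W Pi UW]; rewrite ?sub0v // addvS ?fUs.
Qed.

Lemma leigenspace_cap_sum (I : eqType) A (r : seq I) (a_ : I -> K) (Us : I -> {vspace V}) b :
    (forall i, Us i <= leigenspace A (a_ i))%VS -> {in r, forall i, a_ i != b} ->
  (leigenspace A b :&: \sum_(i <- r) Us i)%VS = 0%VS.
Proof.
move=> Us_a; elim: r => [|i r IH] r_b; first by rewrite big_nil capv0.
have [ai_b /IH capr] : a_ i != b /\ {in r, forall j, a_ j != b}.
  by split=> [|j jr]; apply: r_b; rewrite inE ?eqxx ?jr ?orbT.
apply/eqP; rewrite -subv0; apply/subvP => w /memv_capP[/leigenspaceP Aw].
rewrite big_cons => /memv_addP[x /(subvP (Us_a i))/leigenspaceP Ax [y yr wE]].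
have : (b - a_ i) *: w \in (leigenspace A b :&: \sum_(j <- r) Us j)%VS.
  rewrite memv_cap; apply/andP; split.
    by apply/leigenspaceP; rewrite linearZ /= Aw !scalerA mulrC.
  have -> : (b - a_ i) *: w = A y - a_ i *: y.
    by rewrite scalerBl -Aw wE linearD /= Ax scalerDr opprD addrACA subrr add0r.
  have sum_stable : (A @: (\sum_(j <- r) Us j) <= \sum_(j <- r) Us j)%VS.
    by apply: sumv_stable => j _; exact: sub_leigenspace_stable (Us_a j).
  by rewrite memvB ?memvZ // (subvP sum_stable) ?memv_img.
by rewrite capr !memv0 scaler_eq0 subr_eq0 eq_sym (negbTE ai_b).
Qed.

Lemma eigsp_sub_leigenspace A th i : (eigsp A th i <= leigenspace A th`_i)%VS.
Proof. by rewrite /eigsp; case: ifP; rewrite ?sub0v. Qed.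

Lemma eigsp_default A th i : (size th <= i)%N -> eigsp A th i = 0%VS.
Proof. by rewrite /eigsp leqNgt => /negbTE ->. Qed.

Lemma eigsp_eigenvector A th i v : v \in eigsp A th i -> A v = th`_i *: v.
Proof. by move/(subvP (eigsp_sub_leigenspace A th i))/leigenspaceP. Qed.

Lemma eigsp_neq0 A th i : (forall a, passmx.leigenvalue A a <-> a \in th) ->
  (i < size th)%N -> eigsp A th i != 0%VS.
Proof. by move=> th_eig ith; rewrite /eigsp ith; apply/th_eig/mem_nth. Qed.

Lemma eigsp_cap_sum A th n k : uniq th -> (n <= k)%N -> (k < size th)%N ->
  (eigsp A th k :&: \sum_(j < n) eigsp A th j)%VS = 0%VS.
Proof.
move=> th_uniq nk ksize; apply/eqP; rewrite -subv0.
apply: subv_trans (capvS (eigsp_sub_leigenspace A th k) (subvv _)) _.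
rewrite (@leigenspace_cap_sum _ A _ (fun j : 'I_n => th`_j)) // => [j | j _].
  exact: eigsp_sub_leigenspace.
have jk : (j < k)%N := leq_trans (ltn_ord j) nk.
by rewrite nth_uniq ?ltn_eqF // (ltn_trans jk ksize).
Qed.

Definition eigsp_pred A th i : {vspace V} := if i is j.+1 then eigsp A th j else 0%VS.

Lemma eigsp_pred_eigenvector A th i v : v \in eigsp_pred A th i -> A v = th`_i.-1 *: v.
Proof.
case: i => [|i] /=; last exact: eigsp_eigenvector.
by rewrite memv0 => /eqP ->; rewrite linear0 scaler0.
Qed.

Lemma eigsp_pred_sub_sum A th i n : (i <= n)%N ->
  (eigsp_pred A th i <= \sum_(j < n) eigsp A th j)%VS.
Proof. by case: i => [|i] ni; rewrite ?sub0v // (sumv_sup (Ordinal ni)). Qed.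

Lemma eigsp_rev A th i : (i < size th)%N ->
  eigsp A (rev th) i = eigsp A th (size th - i.+1).
Proof. by move=> ith; rewrite /eigsp size_rev ith nth_rev // ifT //; lia. Qed.

Lemma eigsp_succ_rev A th i : (i < size th)%N ->
  eigsp A (rev th) i.+1 = eigsp_pred A th (size th - i.+1).
Proof.
move=> ith; have [i1 | size_i] := ltnP i.+1 (size th).
  by rewrite eigsp_rev // -(subnSK i1).
by rewrite eigsp_default ?size_rev // (_ : size th - i.+1 = 0)%N //; lia.
Qed.

Lemma eigsp_pred_rev A th i : (i < size th)%N ->
  eigsp_pred A (rev th) i = eigsp A th (size th - i).
Proof.
case: i => [|i] ith /=; last by rewrite eigsp_rev // ltnW.
by rewrite subn0 eigsp_default.
Qed.

Lemma eig_seq_rev A B th : eig_seq A B th -> eig_seq A B (rev th).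
Proof.
case=> th_uniq th_eig nbhd; split=> [|a|i]; rewrite ?rev_uniq ?mem_rev ?size_rev // => ith.
rewrite -/(eigsp_pred A (rev th) i) eigsp_pred_rev // eigsp_succ_rev // eigsp_rev //.
rewrite -(subnSK ith); set j := (size th - i.+1)%N.
have -> : (eigsp A th j.+1 + eigsp A th j + eigsp_pred A th j
          = eigsp_pred A th j + eigsp A th j + eigsp A th j.+1)%VS.
  by rewrite [RHS]addvC (addvC (eigsp_pred A th j)) addvA.
by apply: (nbhd j); rewrite /j; lia.
Qed.

End Eigenspaces.

Section SerreRelation.
Variables (K : fieldType) (V : vectType K).
Implicit Types (A B : 'End(V)) (th : seq K).

Definition serre (q : K) A B : 'End(V) :=
  ((A \o A \o A \o B) - (q + q^-1 + 1) *: (A \o A \o B \o A)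
   + (q + q^-1 + 1) *: (A \o B \o A \o A) - (B \o A \o A \o A))%VF.

Lemma qSerreP q A B : qSerre q A B <-> (forall v, serre q A B v = 0).
Proof.
have serreE v : serre q A B v = A (A (A (B v))) - (q + q^-1 + 1) *: A (A (B (A v)))
    + (q + q^-1 + 1) *: A (B (A (A v))) - B (A (A (A v))).
  by rewrite !(add_lfunE, opp_lfunE, scale_lfunE, comp_lfunE).
by split=> S v; [rewrite serreE | rewrite -serreE].
Qed.

Definition serre_poly_lfun (q t : K) A : 'End(V) :=
  ((A \o A \o A) - ((q + q^-1 + 1) * t) *: (A \o A)
   + ((q + q^-1 + 1) * t ^+ 2) *: A - t ^+ 3 *: \1)%VF.

Lemma serre_eigenvector q A B t v : A v = t *: v ->
  serre q A B v = serre_poly_lfun q t A (B v).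
Proof.
move=> Av; rewrite !(add_lfunE, opp_lfunE, scale_lfunE, comp_lfunE, id_lfunE).
rewrite Av !linearZ /= Av !linearZ /= Av !linearZ /= !scalerA.
by congr (_ + _ *: _ + _ *: _); ring.
Qed.

Lemma serre_poly_lfun_eigenvector q A t a u : A u = a *: u ->
  serre_poly_lfun q t A u = serre_poly q a t *: u.
Proof.
move=> Au; rewrite !(add_lfunE, opp_lfunE, scale_lfunE, comp_lfunE, id_lfunE).
rewrite Au !linearZ /= Au !linearZ /= Au !scalerA /serre_poly.
by rewrite !scalerN -!scaleNr -!scalerDl; congr (_ *: _); ring.
Qed.

Lemma serre_eigsp q A B th i v : eig_seq A B th -> (i < size th)%N -> v \in eigsp A th i ->
  exists u1 u2 u3, [/\ B v = u1 + u2 + u3, u1 \in eigsp_pred A th i,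
    u2 \in eigsp A th i, u3 \in eigsp A th i.+1 &
    serre q A B v = serre_poly q th`_i.-1 th`_i *: u1 + serre_poly q th`_i.+1 th`_i *: u3].
Proof.
case=> _ _ nbhd ith vi.
have /memv_addP[_ /memv_addP[u1 u1P [u2 u2P ->]] [u3 u3P Bv]] :=
  subvP (nbhd i ith) _ (memv_img B vi).
exists u1, u2, u3; split=> //.
rewrite (serre_eigenvector _ _ (eigsp_eigenvector vi)) Bv !linearD /=.
rewrite (serre_poly_lfun_eigenvector _ _ (eigsp_pred_eigenvector u1P)).
rewrite (serre_poly_lfun_eigenvector _ _ (eigsp_eigenvector u2P)).
rewrite (serre_poly_lfun_eigenvector _ _ (eigsp_eigenvector u3P)).
by rewrite serre_polyxx scale0r addr0.
Qed.

Lemma eigsp_sum_full A th : Defs.diagonalizable A ->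
    (forall a, passmx.leigenvalue A a <-> a \in th) ->
  (\sum_(i < size th) eigsp A th i)%VS = fullv.
Proof.
move=> [s sum_s] th_eig; apply/eqP; rewrite eqEsubv subvf /= -sum_s.
elim/big_rec: _ => [|a U _ US]; first exact: sub0v.
rewrite subv_add US andbT.
have [/th_eig ath | ] := boolP (passmx.leigenvalue A a); last first.
  by rewrite negbK => /eqP ->; exact: sub0v.
have ia : (index a th < size th)%N by rewrite index_mem.
by apply: (sumv_sup (Ordinal ia)) => //=; rewrite /eigsp ia nth_index.
Qed.

Lemma eigsp_sub_lker_serre q A B th i : q != 0 -> eig_seq A B th -> qgeometric q th ->
  (eigsp A th i <= lker (serre q A B))%VS.
Proof.
move=> q0 th_seq /qgeometricP geo.
have [ith | /(eigsp_default A) ->] := ltnP i (size th); last exact: sub0v.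
apply/subvP => v vi; rewrite memv_ker.
have [u1 [u2 [u3 [_ u1P _ u3P ->]]]] := serre_eigsp q th_seq ith vi.
have -> : serre_poly q th`_i.-1 th`_i *: u1 = 0.
  have [i0 | i_pos] := posnP i.
    by move: u1P; rewrite i0 memv0 => /eqP ->; rewrite scaler0.
  have := geo i.-1; rewrite prednK // => /(_ ith) thi.
  by apply/eqP; rewrite scaler_eq0 serre_poly_eq0 // thi eqxx !orbT.
have [i1 | /(eigsp_default A) u3E] := ltnP i.+1 (size th).
  have -> : serre_poly q th`_i.+1 th`_i = 0.
    by apply/eqP; rewrite serre_poly_eq0 // geo // eqxx orbT.
  by rewrite scale0r addr0.
by move: u3P; rewrite u3E memv0 => /eqP ->; rewrite scaler0 addr0.
Qed.

Lemma qSerre_of_qgeometric q A B th : q != 0 -> Defs.diagonalizable A ->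
  eig_seq A B th -> qgeometric q th -> qSerre q A B.
Proof.
move=> q0 A_diag th_seq geo; have [_ th_eig _] := th_seq.
apply/qSerreP => v; apply/eqP; rewrite -memv_ker; apply: (subvP _ v (memvf v)).
rewrite -(eigsp_sum_full A_diag th_eig); apply/subv_sumP => i _.
exact: eigsp_sub_lker_serre.
Qed.

Definition irreducible_pair A B := forall W : {vspace V},
  (A @: W <= W)%VS -> (B @: W <= W)%VS -> W = 0%VS \/ W = fullv.

Lemma limg_eigsp_lower q A B th i : eig_seq A B th -> qSerre q A B ->
    (i.+1 < size th)%N -> serre_poly q th`_i.+1 th`_i != 0 ->
  (B @: eigsp A th i <= eigsp_pred A th i + eigsp A th i)%VS.
Proof.
move=> th_seq /qSerreP S ith p_neq0; have [th_uniq _ _] := th_seq.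
apply/subvP => _ /memv_imgP[v vi ->].
have [u1 [u2 [u3 [-> u1P u2P u3P Sv]]]] := serre_eigsp q th_seq (ltnW ith) vi.
suff -> : u3 = 0 by rewrite addr0 memv_add.
have : serre_poly q th`_i.+1 th`_i *: u3 \in
    (eigsp A th i.+1 :&: \sum_(j < i) eigsp A th j)%VS.
  rewrite memv_cap memvZ //=.
  have /eqP : serre_poly q th`_i.-1 th`_i *: u1 + serre_poly q th`_i.+1 th`_i *: u3 = 0.
    by rewrite -Sv S.
  rewrite addrC addr_eq0 => /eqP ->.
  by rewrite rpredN memvZ // (subvP (eigsp_pred_sub_sum A th (leqnn i))).
by rewrite eigsp_cap_sum // !memv0 scaler_eq0 (negbTE p_neq0) => /eqP.
Qed.

Lemma sum_eigsp_lower_stable A B th i : eig_seq A B th -> (i < size th)%N ->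
    (B @: eigsp A th i <= eigsp_pred A th i + eigsp A th i)%VS ->
  (B @: (\sum_(j < i.+1) eigsp A th j) <= \sum_(j < i.+1) eigsp A th j)%VS.
Proof.
case=> _ _ nbhd ith B_lower; rewrite limg_sum; apply/subv_sumP => j _.
have eigsp_sub k : (k <= i)%N -> (eigsp A th k <= \sum_(j < i.+1) eigsp A th j)%VS.
  by move=> ki; exact: (sumv_sup (Ordinal (ki : k < i.+1)%N)).
have [ji | ->] : (j < i)%N \/ (j : nat) = i by have := ltn_ord j; lia.
  apply: subv_trans (nbhd j (ltn_trans ji ith)) _.
  by rewrite -/(eigsp_pred A th j) !subv_add eigsp_pred_sub_sum ?eigsp_sub // ltnW.
by apply: subv_trans B_lower _; rewrite subv_add eigsp_pred_sub_sum ?eigsp_sub.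
Qed.

Lemma qSerre_eig_seq_ratio q A B th i : q != 0 -> eig_seq A B th ->
    irreducible_pair A B -> qSerre q A B -> (i.+1 < size th)%N ->
  th`_i.+1 = th`_i * q \/ th`_i = th`_i.+1 * q.
Proof.
move=> q0 th_seq irr S ith; have [th_uniq th_eig _] := th_seq.
have [p0 | p_neq0] := eqVneq (serre_poly q th`_i.+1 th`_i) 0.
  move/eqP: p0; rewrite serre_poly_eq0 // nth_uniq ?(ltnW ith) // (gtn_eqF (ltnSn i)) /=.
  by case/orP => /eqP e; [left | right]; rewrite e.
pose W := (\sum_(j < i.+1) eigsp A th j)%VS.
have AW : (A @: W <= W)%VS.
  by apply: sumv_stable => j _; exact: sub_leigenspace_stable (eigsp_sub_leigenspace A th j).
have BW : (B @: W <= W)%VS.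
  exact: sum_eigsp_lower_stable th_seq (ltnW ith) (limg_eigsp_lower th_seq S ith p_neq0).
case: (irr W AW BW) => [W0 | Wfull].
  have := eigsp_neq0 (A := A) th_eig (ltn_trans (ltn0Sn i) ith).
  by rewrite -subv0 -W0 (sumv_sup (@ord0 i)).
have := eigsp_neq0 (A := A) th_eig ith.
by rewrite -(capvf (eigsp A th i.+1)) -Wfull eigsp_cap_sum ?eqxx.
Qed.

Lemma qgeometric_eig_seq_of_qSerre q A B th : q != 0 -> eig_seq A B th ->
    irreducible_pair A B -> qSerre q A B ->
  exists th', eig_seq A B th' /\ qgeometric q th'.
Proof.
move=> q0 th_seq irr S; have [th_uniq _ _] := th_seq.
have [up | down] := ratio_dichotomy q0 th_uniq (fun i => qSerre_eig_seq_ratio q0 th_seq irr S).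
  by exists th; split; last exact/qgeometricP.
by exists (rev th); split; [exact: eig_seq_rev | exact/qgeometric_rev].
Qed.

End SerreRelation.

Theorem lemma4p8 (K : fieldType) (V : vectType K) (A As : 'End(V)) (q : K) :
  TDpair A As -> q != 0 -> q != 1 -> q != -1 ->
  ((qSerre q A As /\ qSerre q As A) <->
   ((exists th, eigenvalue_sequence A As th /\ qgeometric q th) /\
    (exists th, dual_eigenvalue_sequence A As th /\ qgeometric q th))).
Proof.
case=> _ [A_diag As_diag] [th th_seq] [th' th'_seq] irr q0 _ _.
have irr' : irreducible_pair As A by move=> W AsW AW; exact: irr W AW AsW.
split=> [[SA SAs] | [[th1 [th1_seq geo1]] [th2 [th2_seq geo2]]]].
  split; first exact: qgeometric_eig_seq_of_qSerre q0 th_seq irr SA.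
  exact: qgeometric_eig_seq_of_qSerre q0 th'_seq irr' SAs.
split; first exact: qSerre_of_qgeometric q0 A_diag th1_seq geo1.
exact: qSerre_of_qgeometric q0 As_diag th2_seq geo2.
Qed.
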